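(* Let $\{\tilde{\mathcal{T}}_n\}_{n\ge K}$ be a $K$-type Community Weighted Recursive Tree with type probabilities $p_1,\dots,p_K$ and positive weights $(\omega_{ij})$, and for $k\ge 0$ let $N_k(n)$ be the number of vertices of out-degree $k$ in $\tilde{\mathcal{T}}_n$. Then for each fixed $k$, $N_k(n)/n\to\tilde c_k$ in probability as $n\to\infty$, where $$\tilde c_k=\sum_{i=1}^K\frac{p_i}{1+\tilde r_i}\left(\frac{\tilde r_i}{1+\tilde r_i}\right)^k,\qquad \tilde r_i=\sum_{j=1}^K\frac{p_j\omega_{ji}}{\sum_{l=1}^K p_l\omega_{jl}}.$$
   Context: $K$-type Community Weighted Recursive Tree (CWRT): fix $K\ge 2$, a probability vector $(p_1,\dots,p_K)$ with $p_1=\max_i p_i>0$, and positive weights $\omega_{ij}$, $1\le i,j\le K$. The initial tree $\tilde{\mathcal{T}}_K$ is a uniform random recursive tree on vertices $\{1,\dots,K\}$ whose vertices are assigned types $1,\dots,K$ via a uniform random permutation (one vertex of each type). For $n>K$, vertex $n$ is added to $\tilde{\mathcal{T}}_{n-1}$: it is assigned type $i$ with probability $p_i$, and then, given type $i$, it attaches by an edge to each particular existing vertex of type $j$ with probability $\omega_{ij}/\sum_{l=1}^K n_l\omega_{il}$, where $n_l$ is the current number of type $l$ vertices. All random choices are independent. Edges are directed from parent (earlier vertex) to child; out-degree is the number of children. *)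

From HB Require Import structures.
From mathcomp Require Import all_boot all_order all_algebra all_fingroup.
From mathcomp Require Import all_classical all_reals all_analysis.
Set Implicit Arguments. Unset Strict Implicit. Unset Printing Implicit Defensive.
Import Order.TTheory GRing.Theory Num.Theory.
Local Open Scope ring_scope.

Section CWRT.
Variable R : realType.
Variable K : nat.

(* A state of the tree: vertex v (0-based, paper's vertex v+1) is given by
   (type of v, parent of v); the root has parent None. *)
Definition cwrt_state := seq ('I_K * option nat).

Definition fdist (X : Type) := seq (R * X).

Definition fbind (X Y : Type) (d : fdist X) (f : X -> fdist Y) : fdist Y :=
  flatten [seq [seq (xw.1 * yw.1, yw.2) | yw <- f xw.2] | xw <- d].

Definition prob (X : Type) (d : fdist X) (P : X -> bool) : R :=
  \sum_(xw <- d) (if P xw.2 then xw.1 else 0).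

(* Uniform random recursive tree on m vertices (parent pointers only). *)
Fixpoint urrt (m : nat) : fdist (seq (option nat)) :=
  match m with
  | 0 => [:: (1, [::])]
  | 1 => [:: (1, [:: None])]
  | m'.+1 => fbind (urrt m')
      (fun s => [seq ((m'%:R)^-1, rcons s (Some u)) | u <- iota 0 m'])
  end.

(* Initial tree: URRT on K vertices, types assigned by a uniform random
   permutation of the types (vertex v gets type sigma v). *)
Definition cwrt_init : fdist cwrt_state :=
  fbind [seq ((K`!%:R)^-1, sigma) | sigma <- enum [set: {perm 'I_K}]]
    (fun sigma => [seq (tw.1, zip [seq sigma i | i <- enum 'I_K] tw.2)
                  | tw <- urrt K]).

Definition cwrt_step (p : 'I_K -> R) (w : 'I_K -> 'I_K -> R)
    (s : cwrt_state) : fdist cwrt_state :=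
  flatten [seq
    [seq (p i * (w i ue.2.1 / \sum_(e <- s) w i e.1), rcons s (i, Some ue.1))
    | ue <- zip (iota 0 (size s)) s]
  | i <- enum 'I_K].

(* Law of the tree with n vertices (meaningful for n >= K). *)
Definition cwrt (p : 'I_K -> R) (w : 'I_K -> 'I_K -> R) (n : nat)
  : fdist cwrt_state :=
  iter (n - K) (fun d => fbind d (cwrt_step p w)) cwrt_init.

Definition outdeg (s : cwrt_state) (u : nat) : nat :=
  count (fun e => e.2 == Some u) s.

Definition Nk (k : nat) (s : cwrt_state) : nat :=
  count (fun u => outdeg s u == k) (iota 0 (size s)).

Definition r_tilde (p : 'I_K -> R) (w : 'I_K -> 'I_K -> R) (i : 'I_K) : R :=
  \sum_j p j * w j i / \sum_l p l * w j l.

Definition c_tilde (p : 'I_K -> R) (w : 'I_K -> 'I_K -> R) (k : nat) : R :=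
  \sum_i p i / (1 + r_tilde p w i) * (r_tilde p w i / (1 + r_tilde p w i)) ^+ k.

End CWRT.

(* Fix a type i and a degree k, let B be the number of type-i vertices of out-degree k
   and Y = B - n c, where c = p_i / (1 + r_i) * (r_i / (1 + r_i)) ^ k, so that c~_k is the
   sum of these c over i.  A newcomer of type j picks a given type-i parent with probability
   w_ji / S_j, and S_j = n q_j + o(n) with q_j = sum_l p_l w_jl once the type counts
   concentrate.  Since c = p_i [k = 0] + r_i (c' - c), with c' the constant of degree k - 1,
   the conditional drift of Y is about -r_i Y / n, up to errors bounded by the type
   deviations and by the deviation at degree k - 1.  Hence E[Y_{n+1}^2] <= E[Y_n^2] + o(n),
   by induction on k, so E[Y_n^2] = o(n^2), E|Y_n| = o(n), and Markov's inequality gives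
   N_k(n) / n -> c~_k in probability. *)

From HB Require Import structures.
From mathcomp Require Import all_boot all_order all_algebra all_fingroup.
From mathcomp Require Import all_classical all_reals all_analysis.
From mathcomp Require Import ring lra.
Import Order.TTheory GRing.Theory Num.Theory.
Local Open Scope classical_set_scope.
Local Open Scope ring_scope.

Set Implicit Arguments. Unset Strict Implicit. Unset Printing Implicit Defensive.

Section FiniteDistributions.
Variable R : realType.

Definition expect (X : Type) (d : fdist R X) (f : X -> R) : R :=
  \sum_(xw <- d) xw.1 * f xw.2.

Definition fdist_on (X : eqType) (Q : X -> Prop) (d : fdist R X) :=
  (forall xw, xw \in d -> 0 <= xw.1 /\ Q xw.2) /\ expect d (fun _ => 1) = 1.

Lemma expect_fbind X Y (d : fdist R X) (g : X -> fdist R Y) f :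
  expect (fbind d g) f = expect d (fun x => expect (g x) f).
Proof.
rewrite /expect /fbind big_flatten big_map; apply: eq_bigr => xw _.
by rewrite big_map mulr_sumr; apply: eq_bigr => yw _; rewrite mulrA.
Qed.

Lemma expectD X (d : fdist R X) f g :
  expect d (fun x => f x + g x) = expect d f + expect d g.
Proof. by rewrite /expect -big_split; apply: eq_bigr => xw _; rewrite mulrDr. Qed.

Lemma expectB X (d : fdist R X) f g :
  expect d (fun x => f x - g x) = expect d f - expect d g.
Proof. by rewrite /expect -sumrB; apply: eq_bigr => xw _; rewrite mulrBr. Qed.

Lemma expectZ X (d : fdist R X) c f :
  expect d (fun x => c * f x) = c * expect d f.
Proof. by rewrite /expect mulr_sumr; apply: eq_bigr => xw _; rewrite mulrCA. Qed.

Lemma expectZr X (d : fdist R X) c f :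
  expect d (fun x => f x * c) = expect d f * c.
Proof. by rewrite mulrC -expectZ; apply: eq_bigr => xw _; rewrite [c * _]mulrC. Qed.

Lemma expect_cst X (d : fdist R X) c :
  expect d (fun _ => c) = c * expect d (fun _ => 1).
Proof. by rewrite -expectZ /expect; under [RHS]eq_bigr do rewrite mulr1. Qed.

Lemma expect_sum X (I : finType) (d : fdist R X) (F : I -> X -> R) :
  expect d (fun x => \sum_i F i x) = \sum_i expect d (F i).
Proof. by rewrite /expect exchange_big; apply: eq_bigr => xw _; rewrite mulr_sumr. Qed.

Lemma prob_expect X (d : fdist R X) P : prob d P = expect d (fun x => (P x)%:R).
Proof.
by rewrite /prob /expect; apply: eq_bigr => xw _; case: (P xw.2); rewrite ?mulr1 ?mulr0.
Qed.

Section Support.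
Variables (X : eqType) (Q : X -> Prop) (d : fdist R X).
Hypothesis d_on : fdist_on Q d.

Lemma expect_cst_on c : expect d (fun _ => c) = c.
Proof. by rewrite expect_cst d_on.2 mulr1. Qed.

Lemma ler_expect f g : (forall x, Q x -> f x <= g x) -> expect d f <= expect d g.
Proof.
move=> fg; rewrite /expect big_seq [leRHS]big_seq; apply: ler_sum => xw xw_d.
by have [w0 /fg] := d_on.1 xw xw_d; apply: ler_wpM2l.
Qed.

Lemma eq_expect f g : (forall x, Q x -> f x = g x) -> expect d f = expect d g.
Proof.
by move=> fg; apply/le_anti; rewrite !ler_expect // => x /fg ->.
Qed.

Lemma prob_ge0_on P : 0 <= prob d P.
Proof.
by rewrite prob_expect -[0](expect_cst_on 0); apply: ler_expect => x _; apply: ler0n.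
Qed.

Lemma markov_fdist_on (P : pred X) f a : 0 < a -> (forall x, Q x -> 0 <= f x) ->
  (forall x, Q x -> P x -> a <= f x) -> prob d P <= expect d f / a.
Proof.
move=> a0 f0 Pf; rewrite prob_expect -expectZr; apply: ler_expect => x Qx.
case: (boolP (P x)) => [/(Pf x Qx) afx | _] /=; first by rewrite ler_pdivlMr // mul1r.
by rewrite divr_ge0 ?f0 // ltW.
Qed.

End Support.

Lemma fdist_on_fbind (X Y : eqType) (Q : X -> Prop) (Q' : Y -> Prop) d
    (g : X -> fdist R Y) :
  fdist_on Q d -> (forall x, Q x -> fdist_on Q' (g x)) -> fdist_on Q' (fbind d g).
Proof.
move=> d_on g_on; split; last first.
  by rewrite expect_fbind -[RHS]d_on.2; apply: (eq_expect d_on) => x /g_on[].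
move=> yw /flattenP[_ /mapP[xw xw_d ->] /mapP[y y_g ->]] /=.
have [w0 Qx] := d_on.1 _ xw_d; have [w0' Qy] := (g_on _ Qx).1 _ y_g.
by rewrite mulr_ge0.
Qed.

End FiniteDistributions.

Section Sublinear.
Variable R : realType.

Definition sublinear (u : nat -> R) :=
  forall e, 0 < e -> exists N, forall n, (N <= n)%N -> u n <= e * n%:R.

Definition subquadratic (u : nat -> R) :=
  forall e, 0 < e -> exists N, forall n, (N <= n)%N -> u n <= e * n%:R ^+ 2.

Lemma exists_natr_gt (x : R) : exists N : nat, x < N%:R.
Proof.
exists (Num.Def.archi_bound `|x|); apply: le_lt_trans (ler_norm x) _.
exact: archi_boundP.
Qed.

Lemma sublinear_cst c : sublinear (fun _ => c).
Proof.
move=> e e0; have [N cN] := exists_natr_gt (c / e).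
exists N => n Nn; rewrite mulrC -ler_pdivrMr //.
by apply: le_trans (ltW cN) _; rewrite ler_nat.
Qed.

Lemma sublinear_le u v : (forall n, u n <= v n) -> sublinear v -> sublinear u.
Proof.
by move=> uv v_sub e e0; have [N vN] := v_sub e e0; exists N => n /vN; apply: le_trans.
Qed.

Lemma sublinearD u v : sublinear u -> sublinear v -> sublinear (fun n => u n + v n).
Proof.
move=> u_sub v_sub e e0; have e2 : 0 < e / 2 by rewrite divr_gt0.
have [N1 uN] := u_sub _ e2; have [N2 vN] := v_sub _ e2.
exists (maxn N1 N2) => n; rewrite geq_max => /andP[/uN u_le /vN v_le]; lra.
Qed.

Lemma sublinearZ c u : 0 <= c -> sublinear u -> sublinear (fun n => c * u n).
Proof.
move=> c0 u_sub e e0; have c1 : 0 < c + 1 by rewrite ltr_wpDl.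
have [N uN] := u_sub _ (divr_gt0 e0 c1); exists N => n /uN u_le.
apply: le_trans (ler_wpM2l c0 u_le) _.
rewrite mulrA ler_wpM2r // mulrCA ger_pMr // ler_pdivrMr // mul1r lerDl.
exact: ler01.
Qed.

Lemma sublinear_sum (I : finType) (F : I -> nat -> R) :
  (forall i, sublinear (F i)) -> sublinear (fun n => \sum_i F i n).
Proof.
move=> F_sub; rewrite /index_enum; elim: (Finite.enum I) => [|i r IH].
  by under eq_fun do rewrite big_nil; apply: sublinear_cst.
by under eq_fun do rewrite big_cons; apply: sublinearD.
Qed.

Lemma subquadratic_of_increments N0 (D h : nat -> R) :
  (forall n, (N0 <= n)%N -> D n.+1 <= D n + h n) -> sublinear h -> subquadratic D.
Proof.
move=> D_incr h_sub e e0; have e2 : 0 < e / 2 by rewrite divr_gt0.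
have [N1 hN1] := h_sub _ e2; pose N := maxn N0 N1.
have [N0N N1N] : (N0 <= N)%N /\ (N1 <= N)%N by rewrite leq_maxl leq_maxr.
have D_le d : D (N + d)%N <= D N + e / 2 * (N + d)%:R ^+ 2.
  elim: d => [|d IH]; first by rewrite addn0 lerDl mulr_ge0 ?sqr_ge0 ?ltW.
  rewrite addnS; apply: le_trans (D_incr _ _) _; first exact: leq_trans N0N (leq_addr _ _).
  have h_le := hN1 (N + d)%N (leq_trans N1N (leq_addr _ _)).
  rewrite -[(N + d).+1%:R]natr1; set x := ((N + d)%:R : R).
  have : 0 <= e / 2 * (x + 1) by rewrite mulr_ge0 ?addr_ge0 // ltW.
  nra.
have [N2 DN2] := exists_natr_gt (D N / (e / 2)).
exists (maxn N N2.+1) => n; rewrite geq_max => /andP[Nn N2n].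
rewrite -(subnKC Nn); apply: le_trans (D_le _) _; rewrite subnKC //.
have n1 : 1 <= n%:R :> R by rewrite ler1n (leq_trans _ N2n).
have DN : D N <= e / 2 * n%:R.
  rewrite mulrC -ler_pdivrMr //; apply: le_trans (ltW DN2) _.
  by rewrite ler_nat ltnW.
have : n%:R <= n%:R ^+ 2 :> R by nra.
nra.
Qed.

End Sublinear.

Section RecursiveTrees.
Variable R : realType.

Definition parent_lt (m : nat) (o : option nat) :=
  if o is Some u then (u < m)%N else true.

Lemma parent_ltW m m' o : (m <= m')%N -> parent_lt m o -> parent_lt m' o.
Proof. by case: o => //= u mm' /leq_trans; apply. Qed.

Definition wf_state (K n : nat) (s : cwrt_state K) :=
  (size s == n) && all (fun e => parent_lt n e.2) s.

Lemma urrt_fdist_on m :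
  fdist_on (fun t => (size t == m) && all (parent_lt m) t) (urrt R m).
Proof.
elim: m => [|[|m] IH].
- by split; [move=> xw /[!inE] /eqP -> | rewrite /expect big_seq1 mulr1].
- by split; [move=> xw /[!inE] /eqP -> | rewrite /expect big_seq1 mulr1].
apply: (fdist_on_fbind IH) => t /andP[/eqP size_t t_lt]; split.
  move=> _ /mapP[u /[!(mem_iota, add0n)] /andP[_ u_lt] ->] /=.
  split; first by rewrite invr_ge0.
  rewrite size_rcons size_t eqxx all_rcons /= (leqW u_lt) /=.
  by apply: sub_all t_lt => o; apply: parent_ltW.
rewrite /expect big_map; under eq_bigr do rewrite mulr1.
by rewrite -[iota _ _]/(index_iota 0 m.+1) sumr_const_nat subn0 -[_^-1 *+ _]mulr_natl mulfV.
Qed.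

Lemma cwrt_init_fdist_on K : fdist_on (@wf_state K K) (cwrt_init R K).
Proof.
apply: (@fdist_on_fbind _ _ _ (fun _ => True)).
  split; first by move=> _ /mapP[sg _ ->]; rewrite invr_ge0.
  rewrite /expect big_map; under eq_bigr do rewrite mulr1.
  by rewrite big_enum sumr_const cardsT card_Sn -[_^-1 *+ _]mulr_natl mulfV.
move=> sg _; have [t_on t_mass] := urrt_fdist_on K; split; last by rewrite /expect big_map.
move=> _ /mapP[tw /t_on[tw0 /andP[/eqP size_t t_lt]] ->] /=; split => //.
rewrite /wf_state size_zip size_map size_enum_ord size_t minnn eqxx /=.
rewrite -(all_map snd (parent_lt K)) -[map _ _]/(unzip2 _) unzip2_zip //.
by rewrite size_map size_enum_ord size_t.
Qed.

End RecursiveTrees.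

Lemma sum_ord_update (R : nmodType) n (g : nat -> bool -> R) u : (u < n)%N ->
  \sum_(v < n) g v (u == v) + g u false = \sum_(v < n) g v false + g u true.
Proof.
move=> u_lt; rewrite (bigD1 (Ordinal u_lt)) // [in RHS](bigD1 (Ordinal u_lt)) //= eqxx.
rewrite addrAC [RHS]addrAC; congr (_ + _); first exact: addrC.
apply: eq_bigr => v v_ne_u; rewrite (_ : u == v = false) //.
by apply: contraNF v_ne_u => /eqP u_v; apply/eqP/val_inj.
Qed.

Lemma outdeg_rcons K (s : cwrt_state K) j u v :
  outdeg (rcons s (j, Some u)) v = if u == v then (outdeg s v).+1 else outdeg s v.
Proof.
by rewrite /outdeg -cats1 count_cat /= addn0 inj_eq //; case: eqP; rewrite ?addn1 ?addn0.
Qed.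

Lemma outdeg_fresh K n (s : cwrt_state K) : wf_state n s -> outdeg s n = 0%N.
Proof.
move=> /andP[_ /allP s_lt]; apply/eqP; rewrite -leqn0 leqNgt -has_count.
by apply/hasP => -[e /s_lt]; case: e.2 => //= u + /eqP[u_n]; rewrite u_n ltnn.
Qed.

Lemma normr_le_add_sqr_div (R : realFieldType) (x a : R) : 0 < a -> `|x| <= a + x ^+ 2 / a.
Proof.
move=> a0; rewrite -real_normK ?num_real //.
have : 0 <= `|x| ^+ 2 / a by rewrite divr_ge0 ?sqr_ge0 ?ltW.
have [xa|ax] := lerP `|x| a; first lra.
have : `|x| <= `|x| ^+ 2 / a by rewrite ler_pdivlMr // expr2 ler_wpM2l // ltW.
lra.
Qed.

(* [(A - B) / S - (a - c) / q] equals [(A - B) (n q - S) / (S n q) + (Ya - Y) / (n q)];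
   the resulting term [- Y ^+ 2 / (n q)] is nonpositive and dropped. *)
Lemma drift_product_bound (R : realFieldType) (Y A B Ya n S q a c M m : R) :
  0 < n -> 0 < q -> 0 < m -> m * n <= S -> `|Y| <= M * n -> `|A - B| <= n ->
  A = Ya + n * a -> B = Y + n * c ->
  Y * ((A - B) / S - (a - c) / q) <= M / (m * q) * `|n * q - S| + M / q * `|Ya|.
Proof.
move=> n0 q0 m0 S_ge Y_le AB_le A_eq B_eq.
have S0 : 0 < S by apply: lt_le_trans S_ge; rewrite mulr_gt0.
have nq0 : 0 < n * q by rewrite mulr_gt0.
set u := Y / (n * q); set v := (A - B) / S.
have -> : Y * (v - (a - c) / q) = u * v * (n * q - S) + u * Ya - Y ^+ 2 / (n * q).
  by rewrite /u /v A_eq B_eq; field; rewrite !gt_eqF.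
have v_le : `|v| <= m^-1.
  rewrite normf_div (gtr0_norm S0) ler_pdivrMr //; apply: le_trans AB_le _.
  by rewrite mulrC ler_pdivlMr // mulrC.
have u_le : `|u| <= M / q.
  by rewrite normf_div (gtr0_norm nq0) ler_pdivrMr // [n * q]mulrC mulrA divfK ?gt_eqF.
have M_q0 : 0 <= M / q by apply: le_trans u_le.
have term1 : u * v * (n * q - S) <= M / (m * q) * `|n * q - S|.
  apply: le_trans (ler_norm _) _; rewrite normrM (normrM u v) ler_wpM2r //.
  by rewrite invfM mulrA mulrAC ler_pM.
have term2 : u * Ya <= M / q * `|Ya|.
  by apply: le_trans (ler_norm _) _; rewrite normrM ler_wpM2r.
have : 0 <= Y ^+ 2 / (n * q) by rewrite divr_ge0 ?sqr_ge0 ?ltW.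
lra.
Qed.

Section CommunityTree.
Variables (R : realType) (K : nat) (p : 'I_K -> R) (w : 'I_K -> 'I_K -> R).
Hypothesis K_gt0 : (0 < K)%N.
Hypothesis p_ge0 : forall i, 0 <= p i.
Hypothesis p_sum1 : \sum_i p i = 1.
Hypothesis w_gt0 : forall i j, 0 < w i j.

Definition vtype (s : cwrt_state K) v := (nth (Ordinal K_gt0, None) s v).1.

Definition wsum j (s : cwrt_state K) := \sum_(v < size s) w j (vtype s v).

Definition attach_prob j s (v : nat) := p j * (w j (vtype s v) / wsum j s).

Definition cnt i (P : nat -> bool) (s : cwrt_state K) : R :=
  \sum_(v < size s) ((vtype s v == i) && P (outdeg s v))%:R.

Definition wmin := \big[Num.min/1]_(ij : 'I_K * 'I_K) w ij.1 ij.2.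

Lemma wmin_gt0 : 0 < wmin.
Proof. by apply: lt_bigmin => // -[i j] _; apply: w_gt0. Qed.

Lemma wmin_le i j : wmin <= w i j.
Proof. by apply/bigmin_leP; right; exists (i, j). Qed.

Lemma wsum_ge j s : wmin * (size s)%:R <= wsum j s.
Proof.
rewrite mulr_natr -[size s in leLHS]card_ord -sumr_const.
by apply: ler_sum => v _; apply: wmin_le.
Qed.

Lemma wsum_gt0 j s : (0 < size s)%N -> 0 < wsum j s.
Proof. by move=> s0; apply: lt_le_trans (wsum_ge j s); rewrite mulr_gt0 ?wmin_gt0 ?ltr0n. Qed.

Lemma attach_prob_ge0 j s v : 0 <= attach_prob j s v.
Proof. by rewrite mulr_ge0 ?divr_ge0 ?sumr_ge0 // => *; apply: ltW. Qed.

Lemma sum_attach_prob j s : (0 < size s)%N -> \sum_(v < size s) attach_prob j s v = p j.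
Proof.
by move=> s0; rewrite -mulr_sumr -mulr_suml mulfV ?mulr1 // gt_eqF ?wsum_gt0.
Qed.

Lemma expect_step s f : expect (cwrt_step p w s) f =
  \sum_j \sum_(v < size s) attach_prob j s v * f (rcons s (j, Some (val v))).
Proof.
rewrite /expect /cwrt_step big_flatten big_map big_enum /=; apply: eq_bigr => j _.
rewrite big_map (big_nth (0%N, (Ordinal K_gt0, None))) size_zip size_iota minnn.
rewrite big_mkord; apply: eq_bigr => v _; rewrite nth_zip ?size_iota // nth_iota //.
by rewrite /attach_prob /wsum (big_nth (Ordinal K_gt0, None)) big_mkord.
Qed.

Section Successors.
Variable s : cwrt_state K.
Hypothesis s_gt0 : (0 < size s)%N.

Lemma ler_expect_step f g :
  (forall j (v : 'I_(size s)), f (rcons s (j, Some (val v))) <= g (rcons s (j, Some (val v)))) ->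
  expect (cwrt_step p w s) f <= expect (cwrt_step p w s) g.
Proof.
move=> fg; rewrite !expect_step; apply: ler_sum => j _; apply: ler_sum => v _.
by rewrite ler_wpM2l ?attach_prob_ge0.
Qed.

Lemma expect_step_cst c : expect (cwrt_step p w s) (fun _ => c) = c.
Proof.
rewrite expect_step -[RHS]mulr1 -p_sum1 mulr_sumr; apply: eq_bigr => j _.
by rewrite -mulr_suml sum_attach_prob // mulrC.
Qed.

End Successors.

Lemma cwrt_step_fdist_on n s :
  wf_state n s -> (0 < n)%N -> fdist_on (@wf_state K n.+1) (cwrt_step p w s).
Proof.
move=> /andP[/eqP size_s s_lt] n0; split; last by rewrite expect_step_cst // size_s.
move=> _ /flattenP[_ /mapP[i _ ->] /mapP[ue ue_s ->]] /=.
split; first by rewrite mulr_ge0 ?divr_ge0 ?sumr_ge0 // => *; apply: ltW.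
have ue_lt : (ue.1 < n)%N.
  have : ue.1 \in unzip1 (zip (iota 0 (size s)) s) by apply: map_f.
  by rewrite unzip1_zip ?size_iota // mem_iota size_s.
rewrite /wf_state size_rcons size_s eqxx all_rcons /= (leq_trans ue_lt) //=.
by apply: sub_all s_lt => e; apply: parent_ltW.
Qed.

Lemma vtype_rcons s x v : (v < size s)%N -> vtype (rcons s x) v = vtype s v.
Proof. by move=> v_lt; rewrite /vtype nth_rcons v_lt. Qed.

Lemma cnt_rcons n s i P j u : wf_state n s -> (u < n)%N ->
  cnt i P (rcons s (j, Some u)) = cnt i P s +
    (((vtype s u == i) && P (outdeg s u).+1)%:R - ((vtype s u == i) && P (outdeg s u))%:R)
    + ((j == i) && P 0%N)%:R.
Proof.
move=> s_wf u_lt; have size_s : size s = n by case/andP: s_wf => /eqP.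
rewrite /cnt size_rcons big_ord_recr /=; congr (_ + _); last first.
  rewrite /vtype nth_rcons ltnn eqxx /= outdeg_rcons size_s (outdeg_fresh s_wf).
  by rewrite ltn_eqF.
under eq_bigr => v _ do rewrite vtype_rcons // outdeg_rcons.
pose g v (b : bool) : R := ((vtype s v == i) && P (if b then (outdeg s v).+1 else outdeg s v))%:R.
apply: (addIr (g u false)); rewrite (sum_ord_update g) ?size_s //= /g /=; ring.
Qed.

Lemma expect_step_cnt n s i P : wf_state n s -> (0 < n)%N ->
  expect (cwrt_step p w s) (cnt i P) = cnt i P s + p i * (P 0%N)%:R +
    \sum_j p j * w j i / wsum j s * (cnt i (fun d => P d.+1) s - cnt i P s).
Proof.
move=> s_wf n0; have size_s : size s = n by case/andP: s_wf => /eqP.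
have s_gt0 : (0 < size s)%N by rewrite size_s.
have attach_j j : \sum_(v < size s) attach_prob j s v * cnt i P (rcons s (j, Some (val v))) =
    p j * (cnt i P s + ((j == i) && P 0%N)%:R) +
    p j * w j i / wsum j s * (cnt i (fun d => P d.+1) s - cnt i P s).
  transitivity (\sum_(v < size s)
      (attach_prob j s v * (cnt i P s + ((j == i) && P 0%N)%:R) + p j * w j i / wsum j s *
       (((vtype s v == i) && P (outdeg s v).+1)%:R - ((vtype s v == i) && P (outdeg s v))%:R))).
    apply: eq_bigr => v _; rewrite (cnt_rcons _ _ _ s_wf) -?size_s ?ltn_ord //=.
    by case: (vtype s v =P i) => [vi|_]; rewrite /attach_prob ?vi /=; ring.
  by rewrite big_split /= -mulr_suml sum_attach_prob // -mulr_sumr sumrB.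
rewrite expect_step; under eq_bigr do rewrite attach_j.
rewrite big_split /=; congr (_ + _).
under eq_bigr do rewrite mulrDr; rewrite big_split /= -mulr_suml p_sum1 mul1r; congr (_ + _).
by rewrite (bigD1 i) //= eqxx big1 ?addr0 // => j /negbTE ->; rewrite mulr0.
Qed.

Definition wavg j := \sum_l p l * w j l.

Lemma wavg_ge j : wmin <= wavg j.
Proof.
rewrite -[leLHS]mulr1 -p_sum1 mulr_sumr; apply: ler_sum => l _.
by rewrite mulrC ler_wpM2l ?wmin_le.
Qed.

Lemma wavg_gt0 j : 0 < wavg j.
Proof. exact: lt_le_trans wmin_gt0 (wavg_ge j). Qed.

Lemma r_tilde_ge0 i : 0 <= r_tilde p w i.
Proof.
by apply: sumr_ge0 => j _; rewrite divr_ge0 ?mulr_ge0 ?p_ge0 ?ltW ?w_gt0 ?(wavg_gt0 j).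
Qed.

Definition c_level i k :=
  p i / (1 + r_tilde p w i) * (r_tilde p w i / (1 + r_tilde p w i)) ^+ k.

Definition c_prev i k := if k is k'.+1 then c_level i k' else 0.

Lemma c_level_rec i k :
  c_level i k = p i * (k == 0)%N%:R + r_tilde p w i * (c_prev i k - c_level i k).
Proof.
have r1 : 1 + r_tilde p w i != 0 by rewrite gt_eqF // ltr_pwDl // r_tilde_ge0.
by case: k => [|k]; rewrite /= /c_level ?expr0 ?exprS; field.
Qed.

Lemma cnt_ge0 i P s : 0 <= cnt i P s.
Proof. exact: sumr_ge0. Qed.

Lemma cnt_le_size i P s : cnt i P s <= (size s)%:R.
Proof.
rewrite /cnt -[size s in leRHS]card_ord -sumr_const.
by apply: ler_sum => v _; case: (_ && _).
Qed.

Lemma cnt_rcons_dist n s i P j u : wf_state n s -> (u < n)%N ->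
  `|cnt i P (rcons s (j, Some u)) - cnt i P s| <= 3.
Proof.
move=> s_wf u_lt; rewrite (cnt_rcons _ _ _ s_wf u_lt) addrAC [cnt i P s + _]addrC addrK.
apply: le_trans (ler_normD _ _) _; apply: le_trans (lerD (ler_normB _ _) (lexx _)) _.
by do 3!case: (_ && _); rewrite /= ?normr0 ?normr1; lra.
Qed.

Lemma wsum_cnt j s : wsum j s = \sum_l w j l * cnt l predT s.
Proof.
rewrite /wsum /cnt; under [RHS]eq_bigr do rewrite mulr_sumr.
rewrite exchange_big /=; apply: eq_bigr => v _.
rewrite (bigD1 (vtype s v)) //= eqxx mulr1 big1 ?addr0 // => l /negbTE.
by rewrite eq_sym => ->; rewrite mulr0.
Qed.

Lemma expect_step_sqr n s (X : cwrt_state K -> R) B : wf_state n s -> (0 < n)%N ->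
  (forall j (v : 'I_(size s)), `|X (rcons s (j, Some (val v))) - X s| <= B) ->
  expect (cwrt_step p w s) (fun s' => X s' ^+ 2) <=
    X s ^+ 2 + 2 * X s * (expect (cwrt_step p w s) X - X s) + B ^+ 2.
Proof.
move=> /andP[/eqP size_s _] n0 X_incr; have s_gt0 : (0 < size s)%N by rewrite size_s.
have -> : expect (cwrt_step p w s) (fun s' => X s' ^+ 2) = expect (cwrt_step p w s)
    (fun s' => X s ^+ 2 + 2 * X s * (X s' - X s) + (X s' - X s) ^+ 2).
  by apply: eq_bigr => xw _; congr (_ * _); ring.
rewrite !expectD expectZ expectB !expect_step_cst // lerD2l.
rewrite -[B ^+ 2](expect_step_cst s_gt0); apply: ler_expect_step => // j v.
by rewrite -[_ ^+ 2]real_normK ?num_real // lerXn2r ?nnegrE ?(le_trans _ (X_incr j v)).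
Qed.

Definition dev i P c s := cnt i P s - (size s)%:R * c.

Lemma dev_rcons_dist n s i P c j u : wf_state n s -> (u < n)%N ->
  `|dev i P c (rcons s (j, Some u)) - dev i P c s| <= 3 + `|c|.
Proof.
move=> s_wf u_lt; rewrite /dev size_rcons -addn1 natrD.
have -> : forall x y z : R, x - (z + 1) * c - (y - z * c) = (x - y) - c by move=> *; ring.
by apply: le_trans (ler_normB _ _) _; rewrite lerD2r (cnt_rcons_dist _ _ _ s_wf).
Qed.

Lemma dev_drift n s i P c : wf_state n s -> (0 < n)%N ->
  expect (cwrt_step p w s) (dev i P c) - dev i P c s =
  expect (cwrt_step p w s) (cnt i P) - cnt i P s - c.
Proof.
move=> s_wf n0; have /andP[/eqP size_s _] := s_wf.
have s_gt0 : (0 < size s)%N by rewrite size_s.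
rewrite /dev expectB (eq_expect (cwrt_step_fdist_on s_wf n0)
  (f := fun s' => (size s')%:R * c) (g := fun _ => n.+1%:R * c)).
  by rewrite expect_step_cst // size_s -addn1 natrD; ring.
by move=> s' /andP[/eqP ->].
Qed.

Lemma dev_bound i P c s : `|dev i P c s| <= (1 + `|c|) * (size s)%:R.
Proof.
apply: le_trans (ler_normB _ _) _; rewrite normrM normr_nat (ger0_norm (cnt_ge0 _ _ _)).
by rewrite mulrDl mul1r lerD ?cnt_le_size // mulrC.
Qed.

Local Notation type_dev l := (dev l predT (p l)).
Local Notation level_dev i k := (dev i (fun d => d == k) (c_level i k)).
Local Notation prev_dev i k := (dev i (fun d => d.+1 == k) (c_prev i k)).

Lemma type_drift n s l : wf_state n s -> (0 < n)%N ->
  expect (cwrt_step p w s) (type_dev l) = type_dev l s.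
Proof.
move=> s_wf n0; apply/eqP; rewrite -subr_eq0 (dev_drift _ _ _ s_wf n0).
rewrite (expect_step_cnt _ _ s_wf n0) big1 => [|j _]; last by rewrite subrr mulr0.
by apply/eqP; rewrite /= addr0; ring.
Qed.

Lemma level_drift n s i k : wf_state n s -> (0 < n)%N ->
  expect (cwrt_step p w s) (level_dev i k) - level_dev i k s =
  \sum_j p j * w j i * ((cnt i (fun d => d.+1 == k) s - cnt i (fun d => d == k) s) / wsum j s
                        - (c_prev i k - c_level i k) / wavg j).
Proof.
move=> s_wf n0; rewrite (dev_drift _ _ _ s_wf n0) (expect_step_cnt _ _ s_wf n0).
under [RHS]eq_bigr do rewrite mulrBr [_ * (_ / wsum _ _)]mulrA mulrAC.
rewrite sumrB -mulr_suml.
have -> : \sum_j p j * w j i * ((c_prev i k - c_level i k) / wavg j) =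
    r_tilde p w i * (c_prev i k - c_level i k).
  by rewrite mulr_suml; apply: eq_bigr => j _; rewrite mulrA mulrAC.
have := c_level_rec i k; rewrite eq_sym; lra.
Qed.

Lemma wsum_type_dev j s : (size s)%:R * wavg j - wsum j s = - \sum_l w j l * type_dev l s.
Proof.
rewrite wsum_cnt /wavg mulr_sumr -sumrB -sumrN; apply: eq_bigr => l _.
by rewrite /dev; ring.
Qed.

Definition level_incr i k s :=
  2 * \sum_j p j * w j i * ((1 + `|c_level i k|) / (wmin * wavg j) *
        \sum_l w j l * `|type_dev l s| + (1 + `|c_level i k|) / wavg j * `|prev_dev i k s|)
  + (3 + `|c_level i k|) ^+ 2.

Lemma expect_step_level_dev_sqr n s i k : wf_state n s -> (0 < n)%N ->
  expect (cwrt_step p w s) (fun s' => level_dev i k s' ^+ 2) <=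
  level_dev i k s ^+ 2 + level_incr i k s.
Proof.
move=> s_wf n0; have size_s : size s = n by case/andP: s_wf => /eqP.
apply: le_trans (expect_step_sqr (B := 3 + `|c_level i k|) s_wf n0 _) _.
  by move=> j v; apply: (dev_rcons_dist (n := n)) => //; rewrite -size_s ltn_ord.
rewrite /level_incr -addrA lerD2l lerD2r -mulrA ler_pM2l // (level_drift _ _ s_wf n0).
rewrite mulr_sumr; apply: ler_sum => j _.
rewrite mulrCA ler_wpM2l ?mulr_ge0 ?p_ge0 ?(ltW (w_gt0 _ _)) //.
have s0 : 0 < (size s)%:R :> R by rewrite ltr0n size_s.
have cnt_dist : `|cnt i (fun d => d.+1 == k) s - cnt i (fun d => d == k) s| <= (size s)%:R.
  have := cnt_le_size i (fun d => d.+1 == k) s; have := cnt_ge0 i (fun d => d.+1 == k) s.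
  have := cnt_le_size i (fun d => d == k) s; have := cnt_ge0 i (fun d => d == k) s.
  by rewrite ler_norml; lra.
have wq0 : 0 < wmin * wavg j := mulr_gt0 wmin_gt0 (wavg_gt0 j).
have drift_le := drift_product_bound (Ya := prev_dev i k s) (a := c_prev i k)
  (c := c_level i k) s0 (wavg_gt0 j) wmin_gt0 (wsum_ge j s)
  (dev_bound i (fun d => d == k) (c_level i k) s) cnt_dist.
apply: le_trans (drift_le _ _) _; [by rewrite /dev; ring | by rewrite /dev; ring |].
rewrite lerD2r ler_wpM2l ?divr_ge0 ?addr_ge0 ?(ltW wq0) //.
rewrite wsum_type_dev normrN; apply: le_trans (ler_norm_sum _ _ _) _.
by apply: ler_sum => l _; rewrite normrM (gtr0_norm (w_gt0 _ _)).
Qed.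

Lemma expect_step_type_dev_sqr n s l : wf_state n s -> (0 < n)%N ->
  expect (cwrt_step p w s) (fun s' => type_dev l s' ^+ 2) <=
  type_dev l s ^+ 2 + (3 + `|p l|) ^+ 2.
Proof.
move=> s_wf n0; have size_s : size s = n by case/andP: s_wf => /eqP.
apply: le_trans (expect_step_sqr (B := 3 + `|p l|) s_wf n0 _) _.
  by move=> j v; apply: (dev_rcons_dist (n := n)) => //; rewrite -size_s ltn_ord.
by rewrite (type_drift _ s_wf n0) subrr mulr0 addr0.
Qed.

Lemma cwrtS n : (K <= n)%N -> cwrt p w n.+1 = fbind (cwrt p w n) (cwrt_step p w).
Proof. by move=> Kn; rewrite /cwrt subSn // iterS. Qed.

Lemma cwrt_fdist_on n : (K <= n)%N -> fdist_on (@wf_state K n) (cwrt p w n).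
Proof.
move=> Kn; rewrite -(subnKC Kn); elim: (n - K)%N => [|d IH].
  by rewrite addn0 /cwrt subnn; apply: cwrt_init_fdist_on.
rewrite addnS cwrtS ?leq_addr //; apply: (fdist_on_fbind IH) => s s_wf.
by apply: cwrt_step_fdist_on s_wf _; rewrite (leq_trans K_gt0) ?leq_addr.
Qed.

Lemma cwrt_mass n : expect (cwrt p w n) (fun _ => 1) = 1.
Proof.
have [Kn|/ltnW] := leqP K n; first by case: (cwrt_fdist_on Kn).
by rewrite -subn_eq0 /cwrt => /eqP ->; case: (cwrt_init_fdist_on R K).
Qed.

Lemma sublinear_expect_norm (X : cwrt_state K -> R) :
  subquadratic (fun n => expect (cwrt p w n) (fun s => X s ^+ 2)) ->
  sublinear (fun n => expect (cwrt p w n) (fun s => `|X s|)).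
Proof.
move=> X_sub e e0; have e2 : 0 < e / 2 by rewrite divr_gt0.
have [N XN] := X_sub _ (exprn_gt0 2 e2).
exists (maxn N K.+1) => n; rewrite geq_max => /andP[/XN X_le /ltnW Kn].
have a0 : 0 < e / 2 * n%:R by rewrite mulr_gt0 // ltr0n (leq_trans K_gt0).
pose g s := e / 2 * n%:R + X s ^+ 2 / (e / 2 * n%:R).
apply: le_trans (ler_expect (cwrt_fdist_on Kn) (g := g) _) _.
  by move=> s _; apply: normr_le_add_sqr_div.
rewrite expectD expect_cst cwrt_mass mulr1 expectZr.
have : expect (cwrt p w n) (fun s => X s ^+ 2) / (e / 2 * n%:R) <= e / 2 * n%:R.
  by rewrite ler_pdivrMr // -expr2 exprMn.
lra.
Qed.

Lemma sublinear_expect_dev (X H : cwrt_state K -> R) :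
  (forall n s, (K <= n)%N -> wf_state n s ->
     expect (cwrt_step p w s) (fun s' => X s' ^+ 2) <= X s ^+ 2 + H s) ->
  sublinear (fun n => expect (cwrt p w n) H) ->
  sublinear (fun n => expect (cwrt p w n) (fun s => `|X s|)).
Proof.
move=> X_step H_sub; apply/sublinear_expect_norm.
apply: (subquadratic_of_increments (N0 := K) (h := fun n => expect (cwrt p w n) H)) => // n Kn.
rewrite cwrtS // expect_fbind -expectD.
by apply: (ler_expect (cwrt_fdist_on Kn)) => s; apply: X_step.
Qed.

Lemma sublinear_type_dev l :
  sublinear (fun n => expect (cwrt p w n) (fun s => `|type_dev l s|)).
Proof.
apply: (sublinear_expect_dev (H := fun _ => (3 + `|p l|) ^+ 2)).
  by move=> n s Kn s_wf; apply: (expect_step_type_dev_sqr _ s_wf (leq_trans K_gt0 Kn)).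
by under eq_fun do rewrite expect_cst cwrt_mass mulr1; apply: sublinear_cst.
Qed.

Lemma sublinear_level_dev_of_prev i k :
  sublinear (fun n => expect (cwrt p w n) (fun s => `|prev_dev i k s|)) ->
  sublinear (fun n => expect (cwrt p w n) (fun s => `|level_dev i k s|)).
Proof.
move=> prev_sub; apply: (sublinear_expect_dev (H := level_incr i k)).
  by move=> n s Kn s_wf; apply: (expect_step_level_dev_sqr _ _ s_wf (leq_trans K_gt0 Kn)).
have M0 : 0 <= 1 + `|c_level i k| by rewrite addr_ge0.
rewrite /level_incr; under eq_fun do rewrite expectD expectZ expect_sum expect_cst cwrt_mass mulr1.
apply: sublinearD (sublinear_cst _); apply: sublinearZ => //; apply: sublinear_sum => j.
under eq_fun do rewrite expectZ expectD !expectZ expect_sum.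
apply: sublinearZ; first by rewrite mulr_ge0 ?p_ge0 ?(ltW (w_gt0 _ _)).
apply: sublinearD; apply: sublinearZ => //.
- by rewrite divr_ge0 ?(ltW (mulr_gt0 wmin_gt0 (wavg_gt0 j))).
- apply: sublinear_sum => l; under eq_fun do rewrite expectZ.
  exact: sublinearZ (ltW (w_gt0 _ _)) (sublinear_type_dev l).
- by rewrite divr_ge0 ?(ltW (wavg_gt0 j)).
Qed.

Lemma sublinear_level_dev k i :
  sublinear (fun n => expect (cwrt p w n) (fun s => `|level_dev i k s|)).
Proof.
elim: k i => [|k IH] i; apply: sublinear_level_dev_of_prev; last exact: IH.
apply: (sublinear_le (v := fun _ => 0)) (sublinear_cst _) => n.
have prev0 s : `|prev_dev i 0 s| = 0.
  by rewrite /dev /cnt big1 ?mulr0 ?subr0 ?normr0 // => v _; rewrite andbF.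
by rewrite /expect big1 // => xw _; rewrite prev0 mulr0.
Qed.

Lemma Nk_cnt k s : (Nk k s)%:R = \sum_i cnt i (fun d => d == k) s.
Proof.
rewrite /Nk -sumn_count sumnE big_map natr_sum.
rewrite (_ : iota 0 _ = index_iota 0 (size s)) ?big_mkord; last by rewrite /index_iota subn0.
rewrite /cnt exchange_big /=; apply: eq_bigr => v _.
rewrite (bigD1 (vtype s v)) //= eqxx big1 ?addr0 // => l /negbTE.
by rewrite eq_sym => ->.
Qed.

Lemma cwrt_Nk_concentration k eps : 0 < eps ->
  (fun n => prob (cwrt p w n) (fun s => eps < `|(Nk k s)%:R / n%:R - c_tilde p w k|))
    @ \oo --> 0.
Proof.
move=> eps0; apply/cvgr0Pnorm_le => e e0.
have [N dev_le] := sublinear_sum (fun i => sublinear_level_dev k i) (mulr_gt0 e0 eps0).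
exists (maxn N K.+1) => // n /=; rewrite geq_max => /andP[/dev_le {}dev_le /ltnW Kn].
have n0 : 0 < n%:R :> R by rewrite ltr0n (leq_trans K_gt0).
have epsn0 : 0 < eps * n%:R by rewrite mulr_gt0.
rewrite ger0_norm ?(prob_ge0_on (cwrt_fdist_on Kn)) //.
apply: le_trans (markov_fdist_on (cwrt_fdist_on Kn)
  (f := fun s => \sum_i `|level_dev i k s|) epsn0 _ _) _.
- by move=> s _; apply: sumr_ge0 => i _.
- move=> s /andP[/eqP size_s _] /ltW eps_le.
  have dev_sum : `|(Nk k s)%:R / n%:R - c_tilde p w k| * n%:R <= \sum_i `|level_dev i k s|.
    rewrite -[X in _ * X <= _](gtr0_norm n0) -normrM mulrBl divfK ?gt_eqF //.
    rewrite Nk_cnt mulrC mulr_sumr -sumrB -size_s; apply: ler_norm_sum.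
  exact: le_trans (ler_wpM2r (ltW n0) eps_le) dev_sum.
by rewrite expect_sum ler_pdivrMr // mulrA.
Qed.

End CommunityTree.

Unset Implicit Arguments.

Theorem theorem3p8 (R : realType) (K : nat) (hK : (2 <= K)%N)
  (p : 'I_K -> R) (w : 'I_K -> 'I_K -> R)
  (hp0 : forall i, 0 <= p i) (hp1 : \sum_i p i = 1)
  (hpmax : forall i j : 'I_K, val j = 0%N -> p i <= p j /\ 0 < p j)
  (hw : forall i j, 0 < w i j) (k : nat) :
  forall eps : R, 0 < eps ->
    (fun n : nat => prob (cwrt p w n)
        (fun s => eps < `| (Nk k s)%:R / n%:R - c_tilde p w k |))
      @ \oo --> 0.
Proof.
exact: cwrt_Nk_concentration (ltnW hK) hp0 hp1 hw k.
Qed.
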